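(* Consider the system $x(t+1)=Ax(t)+Bu_S(t)$, $y_S(t)=Cx(t)+Du_S(t)$ with $x(t)\in\mathbb{R}^n$, $u_S(t)\in\mathbb{R}^m$, $y_S(t)\in\mathbb{R}^p$, under the attack model $u_S(t)=w(t)$, $y(t)=y_S(t)+a(t)$ (controller-designed input equal to zero), where at most $r$ inputs and at most $s$ outputs are attacked. Suppose $(A,B,C,D)$ is $(2r,2s)$-sparse strongly observable. Let $t\ge n-1$ and let $\Gamma_u\subseteq\{1,\dots,m\}$, $\Gamma_y\subseteq\{1,\dots,p\}$ with $|\Gamma_u|\le r$ and $|\Gamma_y|\ge p-s$. If there exist $\hat{\mathbf{U}}\in\mathbb{R}^{n|\Gamma_u|}$ and $\hat x\in\mathbb{R}^n$ such that $$\mathbf{Y}|_{\Gamma_y}(t)=\mathcal{O}_{\Gamma_y}\hat x+\mathcal{N}_{\Gamma_u\to\Gamma_y}\hat{\mathbf{U}},$$ then $\hat x=x(t-n+1)$.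
   Context: The adversarial signals $w(t)\in\mathbb{R}^m$, $a(t)\in\mathbb{R}^p$ are arbitrary except that there exist fixed unknown sets $\Gamma_u^*\subseteq\{1,\dots,m\}$, $|\Gamma_u^*|\le r$, and $\Lambda^*\subseteq\{1,\dots,p\}$, $|\Lambda^*|\le s$, with $w(t)$ supported in $\Gamma_u^*$ and $a(t)$ supported in $\Lambda^*$ for all $t$. (Standing assumption of the paper's observer design: the known controller-designed input is taken to be zero, its effect having been subtracted from the outputs.) Notation: for $\Theta\subseteq\{1,\dots,p\}$, $\mathbf{Y}|_{\Theta}(t)$ is the stacked vector $[\,y(t-n+1)|_\Theta^T\ \cdots\ y(t)|_\Theta^T\,]^T$, where $y(k)|_\Theta$ keeps only the entries of $y(k)$ indexed by $\Theta$. $\mathcal{O}_{\Theta}=\begin{bmatrix}C_\Theta^T & A^TC_\Theta^T & \cdots & (A^T)^{n-1}C_\Theta^T\end{bmatrix}^T$ with $C_\Theta=C|_{(\Theta,\cdot)}$ (rows of $C$ indexed by $\Theta$). For $\Gamma\subseteq\{1,\dots,m\}$, $\mathcal{N}_{\Gamma\to\Theta}$ is the block lower-triangular Toeplitz matrix with $n$ block rows and $n$ block columns whose diagonal blocks are $D_{\Theta\Gamma}=D|_{(\Theta,\Gamma)}$ and whose $(i,j)$ block for $i>j$ is $C_\Theta A^{i-j-1}B_\Gamma$, with $B_\Gamma=B|_{(\cdot,\Gamma)}$ (columns of $B$ indexed by $\Gamma$). Subsystem $(A,B|_{(\cdot,\Gamma)},C|_{(\Theta,\cdot)},D|_{(\Theta,\Gamma)})$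 keeps the inputs in $\Gamma$ and outputs in $\Theta$. A system is strongly observable if for any initial state and any input sequence there exists $\tau$ such that the initial state is uniquely determined by $y(0),\dots,y(\tau)$ (any initial state producing the same outputs under some input sequence is equal to it). The system is $(r',s')$-sparse strongly observable if every subsystem with input set $\Gamma$, $|\Gamma|\le r'$, and output set $\Theta$, $|\Theta|\ge p-s'$, is strongly observable. *)

From HB Require Import structures.
From mathcomp Require Import all_boot all_order all_algebra.
From mathcomp Require Import reals.
Set Implicit Arguments. Unset Strict Implicit. Unset Printing Implicit Defensive.
Import Order.TTheory GRing.Theory Num.Theory.
Local Open Scope ring_scope.

Section Defs.
Variable R : realType.

Definition rows_of {p k : nat} (Th : {set 'I_p}) (M : 'M[R]_(p, k)) : 'M[R]_(#|Th|, k) :=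
  \matrix_(i < #|Th|, j < k) M (enum_val i) j.

Definition cols_of {k m : nat} (G : {set 'I_m}) (M : 'M[R]_(k, m)) : 'M[R]_(k, #|G|) :=
  \matrix_(i < k, j < #|G|) M i (enum_val j).

Fixpoint traj {n m : nat} (A : 'M[R]_n) (B : 'M[R]_(n, m)) (x0 : 'cV[R]_n)
    (u : nat -> 'cV[R]_m) (k : nat) : 'cV[R]_n :=
  match k with
  | 0 => x0
  | k'.+1 => A *m traj A B x0 u k' + B *m u k'
  end.

Definition outp {n m p : nat} (A : 'M[R]_n) (B : 'M[R]_(n, m)) (C : 'M[R]_(p, n))
    (D : 'M[R]_(p, m)) (x0 : 'cV[R]_n) (u : nat -> 'cV[R]_m) (k : nat) : 'cV[R]_p :=
  C *m traj A B x0 u k + D *m u k.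

Definition strongly_observable {n m p : nat} (A : 'M[R]_n) (B : 'M[R]_(n, m))
    (C : 'M[R]_(p, n)) (D : 'M[R]_(p, m)) : Prop :=
  forall (x0 : 'cV[R]_n) (u : nat -> 'cV[R]_m), exists tau : nat,
    forall (x0' : 'cV[R]_n) (u' : nat -> 'cV[R]_m),
      (forall k, (k <= tau)%N -> outp A B C D x0' u' k = outp A B C D x0 u k) ->
      x0' = x0.

Definition sparse_strongly_observable {n m p : nat} (A : 'M[R]_n) (B : 'M[R]_(n, m))
    (C : 'M[R]_(p, n)) (D : 'M[R]_(p, m)) (r' s' : nat) : Prop :=
  forall (G : {set 'I_m}) (Th : {set 'I_p}),
    (#|G| <= r')%N -> (p - s' <= #|Th|)%N ->
    strongly_observable A (cols_of G B) (rows_of Th C) (cols_of G (rows_of Th D)).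

(* k-th block (k < n) of O_Theta : C_Theta A^k *)
Definition obs_block {n p : nat} (A : 'M[R]_n) (C : 'M[R]_(p, n)) (Th : {set 'I_p})
    (k : nat) : 'M[R]_(#|Th|, n) :=
  rows_of Th C *m A ^+ k.

(* (i,j) block of the block lower-triangular Toeplitz matrix N_{Gamma -> Theta} *)
Definition toep_block {n m p : nat} (A : 'M[R]_n) (B : 'M[R]_(n, m)) (C : 'M[R]_(p, n))
    (D : 'M[R]_(p, m)) (G : {set 'I_m}) (Th : {set 'I_p}) (i j : nat)
    : 'M[R]_(#|Th|, #|G|) :=
  if i == j then cols_of G (rows_of Th D)
  else if (j < i)%N then rows_of Th C *m A ^+ (i - j - 1) *m cols_of G B
  else 0.

(* k-th block of the stacked vector Y|_Theta(t) = y(t+1-n+k)|_Theta *)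
Definition Yblock {p : nat} (n : nat) (y : nat -> 'cV[R]_p) (Th : {set 'I_p})
    (t k : nat) : 'cV[R]_#|Th| :=
  rows_of Th (y (t + 1 - n + k)%N).

End Defs.

(* The states from which some input keeps the output at zero for k steps form
   a decreasing chain of subspaces of R^n which is constant as soon as two
   consecutive terms agree; as the dimension can drop at most n times, the
   chain is constant from step n on.  So for a strongly observable system, zero
   output during n steps already forces a zero initial state.  If (xhat, Uhat)
   fits the outputs on Gy, its difference with the true pair (x(t-n+1), w) is
   driven by an input supported on Gu :|: Gu_star (at most 2r entries) and gives
   zero output on the unattacked rows Gy :\: Lam_star (at least p-2s entries)
   during n steps, so (2r,2s)-sparse strong observability gives
   xhat = x(t-n+1). *)
From HB Require Import structures.
From mathcomp Require Import all_boot all_order all_algebra.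
From mathcomp Require Import reals zify.
Import Order.TTheory GRing.Theory Num.Theory.
Local Open Scope ring_scope.

Section DecreasingChain.
Variables (K : fieldType) (vT : vectType K).

Lemma decreasing_vspace_stalls (V : nat -> {vspace vT}) :
  (forall k, (V k.+1 <= V k)%VS) ->
  exists2 k, (k <= \dim (V 0))%N & V k.+1 = V k.
Proof.
move=> decV.
have dim_drop k : (forall j, (j < k)%N -> V j.+1 != V j) ->
    (\dim (V k) + k <= \dim (V 0))%N.
  elim: k => [|k IHk] strict; first by rewrite addn0.
  have lt_dim : (\dim (V k.+1) < \dim (V k))%N.
    by rewrite ltnNge; apply: contra (strict k (ltnSn k)) => le_dim; rewrite eqEdim decV.
  apply: leq_trans (IHk (fun j lt_jk => strict j (ltnW lt_jk))).
  by rewrite addnS -addSn leq_add2r.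
case: (pickP (fun k : 'I_(\dim (V 0)).+1 => V k.+1 == V k)) => [k /eqP stall|no_stall].
  by exists k; rewrite // -ltnS.
have := dim_drop (\dim (V 0)).+1 (fun j lt_jd => negbT (no_stall (Ordinal lt_jd))).
by rewrite addnS ltnNge leq_addl.
Qed.

End DecreasingChain.

Section Trajectories.
Context {R : realType} {n m p : nat}.
Variables (A : 'M[R]_n) (B : 'M[R]_(n, m)) (C : 'M[R]_(p, n)) (D : 'M[R]_(p, m)).

Lemma trajS x0 u k :
  traj A B x0 u k.+1 = traj A B (A *m x0 + B *m u 0%N) (fun j => u j.+1) k.
Proof. by elim: k => [//|k IHk] /=; rewrite -IHk. Qed.

Lemma outpS x0 u k :
  outp A B C D x0 u k.+1 = outp A B C D (A *m x0 + B *m u 0%N) (fun j => u j.+1) k.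
Proof. by rewrite /outp trajS. Qed.

Lemma traj0 k : traj A B 0 (fun=> 0) k = 0.
Proof. by elim: k => [//|k IHk] /=; rewrite IHk !mulmx0 addr0. Qed.

Lemma outp0 k : outp A B C D 0 (fun=> 0) k = 0.
Proof. by rewrite /outp traj0 !mulmx0 addr0. Qed.

Lemma trajB x0 x0' u u' k :
  traj A B (x0 - x0') (fun j => u j - u' j) k = traj A B x0 u k - traj A B x0' u' k.
Proof. by elim: k => [//|k IHk] /=; rewrite IHk !mulmxBr opprD addrACA. Qed.

Lemma outpB x0 x0' u u' k :
  outp A B C D (x0 - x0') (fun j => u j - u' j) k =
  outp A B C D x0 u k - outp A B C D x0' u' k.
Proof. by rewrite /outp trajB !mulmxBr opprD addrACA. Qed.

Lemma trajE x0 u k :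
  traj A B x0 u k = A ^+ k *m x0 + \sum_(0 <= j < k) A ^+ (k - j - 1) *m B *m u j.
Proof.
elim: k => [|k IHk] /=; first by rewrite expr0 mul1mx big_geq // addr0.
have expS j : A ^+ j.+1 = A *m A ^+ j by rewrite exprS.
rewrite IHk big_nat_recr //= mulmxDr mulmxA -expS mulmx_sumr -addrA.
congr (_ + (_ + _)); last by rewrite subSnn subnn expr0 mul1mx.
apply: eq_big_nat => j /andP[_ lt_jk].
by rewrite !mulmxA -expS; congr (_ ^+ _ *m _ *m _); lia.
Qed.

Lemma traj_from {x : nat -> 'cV[R]_n} {w : nat -> 'cV[R]_m} :
  (forall k, x k.+1 = A *m x k + B *m w k) ->
  forall t0 k, x (t0 + k)%N = traj A B (x t0) (fun j => w (t0 + j)%N) k.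
Proof.
move=> dyn t0; elim=> [|k IHk]; first by rewrite addn0.
by rewrite addnS dyn IHk.
Qed.

End Trajectories.

Section StrongObservability.
Context {R : realType} {n m p : nat}.
Variables (A : 'M[R]_n) (B : 'M[R]_(n, m)) (C : 'M[R]_(p, n)) (D : 'M[R]_(p, m)).

(* The projection onto the state part of the pairs (z, v) with C z + D v = 0
   and A z + B v \in V. *)
Definition unobs_pre (V : {vspace 'cV[R]_n}) : {vspace 'cV[R]_n} :=
  (linfun (mulmx (row_mx 1%:M (0 : 'M[R]_(n, m)))) @:
    (lker (linfun (mulmx (row_mx C D))) :&: linfun (mulmx (row_mx A B)) @^-1: V))%VS.

Lemma unobs_preP (V : {vspace 'cV[R]_n}) (z : 'cV[R]_n) :
  reflect (exists v, C *m z + D *m v = 0 /\ A *m z + B *m v \in V) (z \in unobs_pre V).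
Proof.
apply: (iffP memv_imgP) => [[zv]|[v [out0 next]]].
  rewrite memv_cap memv_ker -memv_preim !lfunE /= => /andP[out0 next] ->.
  move: out0 next; rewrite -[zv]vsubmxK !mul_row_col mul1mx mul0mx addr0 => /eqP.
  by exists (dsubmx zv).
exists (col_mx z v); last by rewrite lfunE /= mul_row_col mul1mx mul0mx addr0.
by rewrite memv_cap memv_ker -memv_preim !lfunE /= !mul_row_col out0 eqxx.
Qed.

Definition unobs k := iter k unobs_pre fullv.

Lemma unobsP k z :
  z \in unobs k <-> exists v, forall i, (i < k)%N -> outp A B C D z v i = 0.
Proof.
elim: k z => [|k IHk] z; first by split=> _; [exists (fun=> 0) | exact: memvf].
split=> [/unobs_preP [v0 [out0 /IHk [v out_v]]]|[v out_v]].
  exists (fun j => if j is j'.+1 then v j' else v0) => -[//|i lt_ik].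
  by rewrite outpS; apply: out_v.
apply/unobs_preP; exists (v 0%N); split; first exact: (out_v 0%N).
by apply/IHk; exists (fun j => v j.+1) => i lt_ik; rewrite -outpS; apply: out_v.
Qed.

Lemma unobs_leq {j k} : (j <= k)%N -> (unobs k <= unobs j)%VS.
Proof.
move=> le_jk; apply/subvP => z /unobsP [v out_v]; apply/unobsP.
by exists v => i lt_ij; apply: out_v (leq_trans lt_ij le_jk).
Qed.

Lemma unobs_stall k j : unobs k.+1 = unobs k -> unobs (j + k) = unobs k.
Proof.
move=> stall; elim: j => [//|j IHj].
by rewrite addSn -[RHS]stall /= -/(unobs (j + k)) IHj.
Qed.

Lemma unobs_n_sub N : (unobs n <= unobs N)%VS.
Proof.
have [k le_k stall] := @decreasing_vspace_stalls _ _ unobs (fun k => unobs_leq (leqnSn k)).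
have le_kn : (k <= n)%N by move: le_k; rewrite /= dimvf dim_matrix mulr1.
have unobs_k j : (k <= j)%N -> unobs j = unobs k.
  by move=> le_kj; rewrite -(subnK le_kj) unobs_stall.
rewrite (unobs_k _ le_kn) -(unobs_k (N + n)%N) ?unobs_leq ?leq_addr //.
exact: leq_trans le_kn (leq_addl N n).
Qed.

Lemma strongly_observable_zero_output :
  strongly_observable A B C D ->
  forall z v, (forall i, (i < n)%N -> outp A B C D z v i = 0) -> z = 0.
Proof.
move=> so z v out_v; have [tau tauP] := so 0 (fun=> 0).
have /unobsP [v' out_v'] : z \in unobs tau.+1.
  by apply: subvP (unobs_n_sub _) _ _; apply/unobsP; exists v.
by apply: (tauP z v') => k le_k; rewrite out_v' // outp0.
Qed.

End StrongObservability.

Section Selection.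
Context {R : realType}.

Definition sel_mx {p : nat} (Th : {set 'I_p}) : 'M[R]_(#|Th|, p) :=
  \matrix_(i, j) (enum_val i == j)%:R.

Lemma rows_ofE {p k : nat} (Th : {set 'I_p}) (M : 'M[R]_(p, k)) :
  rows_of Th M = sel_mx Th *m M.
Proof.
apply/matrixP => i j; rewrite !mxE (bigD1 (enum_val i)) //= mxE eqxx mul1r big1 ?addr0 //.
by move=> l /negbTE ne_l; rewrite mxE eq_sym ne_l mul0r.
Qed.

Lemma cols_ofE {k m : nat} (G : {set 'I_m}) (M : 'M[R]_(k, m)) :
  cols_of G M = M *m (sel_mx G)^T.
Proof.
apply/matrixP => i j; rewrite !mxE (bigD1 (enum_val j)) //= !mxE eqxx mulr1 big1 ?addr0 //.
by move=> l /negbTE ne_l; rewrite !mxE eq_sym ne_l mulr0.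
Qed.

Lemma rows_of_rank {p k : nat} (Th : {set 'I_p}) (M : 'M[R]_(p, k)) i (Th_i : i \in Th) j :
  rows_of Th M (enum_rank_in Th_i i) j = M i j.
Proof. by rewrite mxE enum_rankK_in. Qed.

Lemma rows_of_eq0 {p : nat} (Th : {set 'I_p}) (M : 'cV[R]_p) :
  (forall i, i \in Th -> M i 0 = 0) -> rows_of Th M = 0.
Proof. by move=> M0; apply/matrixP => i j; rewrite !mxE (ord1 j) M0 ?enum_valP. Qed.

Lemma sel_mxT_supp {m : nat} (G : {set 'I_m}) (U : 'cV[R]_#|G|) i :
  i \notin G -> ((sel_mx G)^T *m U) i 0 = 0.
Proof.
move=> notG_i; rewrite mxE big1 // => j _; rewrite !mxE.
suff /negbTE -> : enum_val j != i by rewrite mul0r.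
by apply: contraNneq notG_i => <-; apply: enum_valP.
Qed.

Lemma sel_mxTK {m : nat} (G : {set 'I_m}) (u : 'cV[R]_m) :
  (forall i, i \notin G -> u i 0 = 0) -> (sel_mx G)^T *m (sel_mx G *m u) = u.
Proof.
move=> supp_u; apply/matrixP => i j; rewrite (ord1 j) mxE.
have [G_i|notG_i] := boolP (i \in G); last first.
  rewrite supp_u // big1 // => l _; rewrite !mxE.
  by case: eqP => [eq_li|]; [move: notG_i; rewrite -eq_li enum_valP | rewrite mul0r].
rewrite (bigD1 (enum_rank_in G_i i)) //= big1 ?addr0.
  by rewrite -rows_ofE rows_of_rank !mxE enum_rankK_in // eqxx mul1r.
move=> l ne_l; rewrite !mxE; case: eqP => [eq_li|]; last by rewrite mul0r.
by case/eqP: ne_l; rewrite -[l](enum_valK_in G_i) eq_li.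
Qed.

End Selection.

Section Subsystems.
Context {R : realType} {n m p : nat}.
Variables (A : 'M[R]_n) (B : 'M[R]_(n, m)) (C : 'M[R]_(p, n)) (D : 'M[R]_(p, m)).

Lemma traj_subsystem (G : {set 'I_m}) x0 (u : nat -> 'cV[R]_m) k :
  (forall j i, i \notin G -> u j i 0 = 0) ->
  traj A (cols_of G B) x0 (fun j => rows_of G (u j)) k = traj A B x0 u k.
Proof.
move=> supp_u; elim: k => [//|k IHk] /=.
by rewrite IHk cols_ofE rows_ofE -mulmxA sel_mxTK //; apply: supp_u.
Qed.

Lemma outp_subsystem (G : {set 'I_m}) (Th : {set 'I_p}) x0 (u : nat -> 'cV[R]_m) k :
  (forall j i, i \notin G -> u j i 0 = 0) ->
  outp A (cols_of G B) (rows_of Th C) (cols_of G (rows_of Th D)) x0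
    (fun j => rows_of G (u j)) k = rows_of Th (outp A B C D x0 u k).
Proof.
move=> supp_u; rewrite /outp traj_subsystem // !cols_ofE !rows_ofE -!mulmxA sel_mxTK.
  by rewrite mulmxDr !mulmxA.
by apply: supp_u.
Qed.

Lemma sparse_strongly_observable_inj (u u' : nat -> 'cV[R]_m)
    {r' s'} {G : {set 'I_m}} {Th : {set 'I_p}} {x0 x0'} :
  sparse_strongly_observable A B C D r' s' ->
  (#|G| <= r')%N -> (p - s' <= #|Th|)%N ->
  (forall j i, i \notin G -> u j i 0 = u' j i 0) ->
  (forall k i, (k < n)%N -> i \in Th ->
     outp A B C D x0 u k i 0 = outp A B C D x0' u' k i 0) ->
  x0 = x0'.
Proof.
move=> sso card_G card_Th eq_u eq_out; apply/eqP; rewrite -subr_eq0; apply/eqP.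
have supp_du j i : i \notin G -> (u j - u' j) i 0 = 0.
  by move=> notG_i; rewrite !mxE eq_u // subrr.
apply: (strongly_observable_zero_output _ _ _ _ (sso G Th card_G card_Th) _
          (fun j => rows_of G (u j - u' j))) => k lt_kn.
rewrite outp_subsystem // outpB; apply: rows_of_eq0 => i Th_i.
by rewrite [LHS]mxE [X in _ + X]mxE eq_out // subrr.
Qed.

Definition lift_input {G : {set 'I_m}} (U : 'I_n -> 'cV[R]_#|G|) (j : nat) : 'cV[R]_m :=
  (sel_mx G)^T *m oapp U 0 (insub j).

Lemma toeplitz_outp (G : {set 'I_m}) (Th : {set 'I_p}) (U : 'I_n -> 'cV[R]_#|G|)
    x0 (k : 'I_n) :
  obs_block A C Th k *m x0 + \sum_(j < n) toep_block A B C D G Th k j *m U j =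
  rows_of Th (outp A B C D x0 (lift_input U) k).
Proof.
pose U' j := oapp U 0 (insub j).
have -> : \sum_(j < n) toep_block A B C D G Th k j *m U j =
          \sum_(0 <= j < n) toep_block A B C D G Th k j *m U' j.
  by rewrite big_mkord; apply: eq_bigr => j _; rewrite /U' valK.
rewrite (big_cat_nat (leq0n k.+1) (ltn_ord k)) /= big_nat_recr //=.
have future0 : \sum_(k.+1 <= j < n) toep_block A B C D G Th k j *m U' j = 0.
  rewrite big_nat_cond big1 // => j /andP[/andP[lt_kj _] _].
  by rewrite /toep_block ltn_eqF // ltnNge ltnW // mul0mx.
have past : \sum_(0 <= j < k) toep_block A B C D G Th k j *m U' j =
            \sum_(0 <= j < k) sel_mx Th *m C *m A ^+ (k - j - 1) *m B *m lift_input U j.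
  apply: eq_big_nat => j /andP[_ lt_jk].
  by rewrite /toep_block (gtn_eqF lt_jk) lt_jk rows_ofE cols_ofE /lift_input ?mulmxA.
rewrite past future0 addr0 /toep_block eqxx /obs_block /outp trajE.
rewrite !rows_ofE !mulmxDr !mulmx_sumr !addrA !mulmxA.
congr (_ + _ + _); last by rewrite cols_ofE /lift_input.
by apply: eq_big_nat => j _; rewrite !mulmxA.
Qed.

End Subsystems.

Theorem proposition1 (R : realType) (n m p r s : nat)
    (A : 'M[R]_n) (B : 'M[R]_(n, m)) (C : 'M[R]_(p, n)) (D : 'M[R]_(p, m))
    (x : nat -> 'cV[R]_n) (w : nat -> 'cV[R]_m) (a : nat -> 'cV[R]_p)
    (y : nat -> 'cV[R]_p)
    (Hdyn : forall k, x k.+1 = A *m x k + B *m w k)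
    (Hout : forall k, y k = C *m x k + D *m w k + a k)
    (Gu_star : {set 'I_m}) (Lam_star : {set 'I_p})
    (HGu_star : (#|Gu_star| <= r)%N) (HLam_star : (#|Lam_star| <= s)%N)
    (Hw_supp : forall k (i : 'I_m), i \notin Gu_star -> w k i 0 = 0)
    (Ha_supp : forall k (i : 'I_p), i \notin Lam_star -> a k i 0 = 0)
    (Hsso : sparse_strongly_observable A B C D (2 * r) (2 * s))
    (t : nat) (Ht : (n - 1 <= t)%N)
    (Gu : {set 'I_m}) (Gy : {set 'I_p})
    (HGu : (#|Gu| <= r)%N) (HGy : (p - s <= #|Gy|)%N)
    (Uhat : 'I_n -> 'cV[R]_#|Gu|) (xhat : 'cV[R]_n)
    (Hfit : forall k : 'I_n,
        Yblock n y Gy t k =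
          obs_block A C Gy k *m xhat
          + \sum_(j < n) toep_block A B C D Gu Gy k j *m Uhat j) :
  xhat = x (t + 1 - n)%N.
Proof.
set t0 := (t + 1 - n)%N.
have card_inputs : (#|Gu :|: Gu_star| <= 2 * r)%N by rewrite cardsU; lia.
have card_outputs : (p - 2 * s <= #|Gy :\: Lam_star|)%N.
  by rewrite cardsD; have := subset_leq_card (subsetIr Gy Lam_star); lia.
apply: (sparse_strongly_observable_inj A B C D (lift_input Uhat)
          (fun j => w (t0 + j)%N) Hsso card_inputs card_outputs) => [j i|k i lt_kn].
  rewrite inE negb_or => /andP[notGu notGu_star].
  by rewrite sel_mxT_supp // Hw_supp.
rewrite inE => /andP[notLam Gy_i].
have /matrixP/(_ (enum_rank_in Gy_i i) 0) := Hfit (Ordinal lt_kn).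
rewrite toeplitz_outp /Yblock -/t0 !rows_of_rank /= => <-.
by rewrite Hout mxE Ha_supp // addr0 (traj_from A B Hdyn).
Qed.
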